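(* Let $X$ be a nonempty set and let $Z\subset\{0,1\}^X$ be a nonempty finite linearly dependent set of nonzero vectors, and put $p=|Z|-1$. Then there exist integers $(\Delta_w)_{w\in Z}$, not all zero, such that $|\Delta_w|\le a(p)$ for each $w\in Z$ and $\sum_{w\in Z}\Delta_w\, w=0$.
   Context: $\{0,1\}^X\subset\mathbb{R}^X$ is the set of functions $X\to\{0,1\}$, viewed as vectors in the real vector space $\mathbb{R}^X$. For a positive integer $p$, $a(p)$ denotes the maximum determinant of a $p\times p$ matrix all of whose entries are $0$ or $1$. *)

From mathcomp Require Import all_boot all_order all_algebra.
From mathcomp Require Import reals.
Set Implicit Arguments. Unset Strict Implicit. Unset Printing Implicit Defensive.
Import Order.TTheory GRing.Theory Num.Theory.
Local Open Scope ring_scope.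

Definition mx01 (p : nat) (A : 'M[bool]_p) : 'M[int]_p :=
  map_mx (fun b : bool => (b%:R : int)) A.

(* a(p): maximum determinant of a p x p matrix with all entries 0 or 1.
   The fold starts at 0, which is harmless: for p >= 1 the zero matrix has
   determinant 0, and for p = 0 the maximum is det of the empty matrix = 1. *)
Definition amax (p : nat) : int :=
  \big[Num.max/0]_(A : 'M[bool]_p) \det (mx01 A).

From mathcomp Require Import all_boot all_order all_algebra.
From mathcomp Require Import reals boolp.
Import Order.TTheory GRing.Theory Num.Theory.
Set Implicit Arguments. Unset Strict Implicit. Unset Printing Implicit Defensive.
Local Open Scope ring_scope.

(* Collect the 0/1 patterns (v_i(x))_i, x in X, as the rows of an integer
   matrix A; the given real relation is a nonzero vector in its kernel, so
   r := rank A < n.  Choose an r x r nonsingular minor S of A, on columns g,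
   and a column j outside g.  By Cramer's rule the vector with entry -det S
   at j, the determinant of S with column k replaced by column j at g k, and
   0 elsewhere, lies in the kernel of A.  Every entry is thus, up to sign, an
   r x r minor of a 0/1 matrix, so it is bounded by a(r) <= a(n-1). *)

Definition zero_one_mx m n (A : 'M[int]_(m, n)) := forall i j, A i j = 0 \/ A i j = 1.

Lemma zero_one_mxsub m n m' n' (f : 'I_m' -> 'I_m) (g : 'I_n' -> 'I_n)
    (A : 'M[int]_(m, n)) :
  zero_one_mx A -> zero_one_mx (mxsub f g A).
Proof. by move=> A01 i j; rewrite mxE. Qed.

Lemma det_le_amax r (A : 'M[int]_r) : zero_one_mx A -> \det A <= amax r.
Proof.
move=> A01; have -> : A = mx01 (map_mx (fun z : int => z == 1) A).
  by apply/matrixP => i j; rewrite !mxE; case: (A01 i j) => ->.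
exact: (le_bigmax _ (fun B : 'M[bool]_r => \det (mx01 B))).
Qed.

Lemma amax_ge0 r : 0 <= amax r.
Proof. by rewrite /amax; elim/big_rec: _ => // A x _ x_ge0; rewrite le_max x_ge0 orbT. Qed.

(* A row swap flips the sign of a negative determinant; for [r <= 1] it cannot be negative. *)
Lemma abs_det_le_amax r (A : 'M[int]_r) : zero_one_mx A -> `|\det A| <= amax r.
Proof.
move=> A01; have [det_ge0|det_lt0] := lerP 0 (\det A).
  by rewrite ger0_norm // det_le_amax.
rewrite ltr0_norm //; case: r A A01 det_lt0 => [|[|r]] A A01 det_lt0.
- by rewrite det_mx00 in det_lt0.
- by rewrite det_mx11 in det_lt0; case: (A01 0 0) det_lt0 => ->.
have /det_le_amax : zero_one_mx (xrow 0 1 A) by rewrite xrowEsub; apply: zero_one_mxsub.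
by rewrite xrowE det_mulmx det_perm perm.odd_tperm /= expr1 mulN1r.
Qed.

Lemma amax_leS r : amax r <= amax r.+1.
Proof.
apply: bigmax_le => [|A _]; first exact: amax_ge0.
pose B : 'M[bool]_(1 + r) := block_mx (const_mx true) (const_mx false) (const_mx false) A.
have -> : \det (mx01 A) = \det (mx01 B).
  by rewrite /mx01 map_block_mx !map_const_mx det_ublock det_mx11 mxE /= mul1r.
exact: (le_bigmax _ (fun B : 'M[bool]_r.+1 => \det (mx01 B))).
Qed.

Lemma le_amax : {homo amax : r s / (r <= s)%N >-> r <= s}.
Proof. exact: homo_leq le_trans amax_leS. Qed.

Lemma det_colsub_with (R : comNzRingType) r n (M : 'M[R]_(r, n)) (g : 'I_r -> 'I_n) k j :
  \det (colsub [eta g with k |-> j] M) = (\adj (colsub g M) *m col j M) k 0.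
Proof.
rewrite (expand_det_col _ k) mxE; apply: eq_bigr => i _.
rewrite !mxE /= eqxx mulrC; congr (_ * _); rewrite /cofactor; congr (_ * \det _).
by apply/matrixP => a b; rewrite !mxE /= eq_sym (negbTE (neq_lift _ _)).
Qed.

Section CramerVector.
Variables (R : comNzRingType) (r n : nat) (M : 'M[R]_(r, n)).
Variables (g : 'I_r -> 'I_n) (j : 'I_n).

Definition cramer_vector : 'cV[R]_n :=
  colsub g 1%:M *m (\adj (colsub g M) *m col j M) - \det (colsub g M) *: delta_mx j 0.

Lemma mul_cramer_vector : M *m cramer_vector = 0.
Proof.
rewrite mulmxBr mulmxA mulmx_colsub mulmx1 mulmxA mul_mx_adj mul_scalar_mx.
by rewrite -scalemxAr -colE subrr.
Qed.

Hypotheses (g_inj : injective g) (j_notin_g : j \notin codom g).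

Lemma cramer_vector_j : cramer_vector j 0 = - \det (colsub g M).
Proof.
rewrite /cramer_vector; move: (_ *m col j M) => w.
rewrite !mxE eqxx mulr1 big1 ?add0r // => k _; rewrite !mxE.
by case: eqP => [j_gk | _]; [case/negP: j_notin_g; rewrite j_gk codom_f | rewrite mul0r].
Qed.

Lemma cramer_vector_g k : cramer_vector (g k) 0 = (\adj (colsub g M) *m col j M) k 0.
Proof.
have gk_neq_j : g k != j by apply: contraNneq j_notin_g => <-; apply: codom_f.
rewrite /cramer_vector; move: (_ *m col j M) => w.
rewrite !mxE (negbTE gk_neq_j) mulr0 subr0 (bigD1 k) //= big1 ?addr0 => [|k' k'_neq_k].
  by rewrite !mxE eqxx mul1r.
by rewrite !mxE (inj_eq g_inj) eq_sym (negbTE k'_neq_k) mul0r.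
Qed.

Lemma cramer_vector_out l : l != j -> l \notin codom g -> cramer_vector l 0 = 0.
Proof.
move=> l_neq_j l_notin_g; rewrite /cramer_vector; move: (_ *m col j M) => w.
rewrite !mxE (negbTE l_neq_j) mulr0 subr0 big1 // => k _; rewrite !mxE.
by case: eqP => [l_gk | _]; [case/negP: l_notin_g; rewrite l_gk codom_f | rewrite mul0r].
Qed.

End CramerVector.

Lemma cramer_vector_minor (R : numDomainType) r n (M : 'M[R]_(r, n)) g j l :
  injective g -> j \notin codom g ->
  exists g' : 'I_r -> 'I_n, `|cramer_vector M g j l 0| <= `|\det (colsub g' M)|.
Proof.
move=> g_inj j_notin_g; have [-> | l_neq_j] := eqVneq l j.
  by exists g; rewrite cramer_vector_j // normrN.
have [/codomP [k ->] | l_notin_g] := boolP (l \in codom g).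
  by exists [eta g with k |-> j]; rewrite cramer_vector_g // det_colsub_with.
by exists g; rewrite cramer_vector_out // normr0.
Qed.

Lemma rank_lt_of_kernel (F : fieldType) m n (A : 'M[F]_(m, n)) (c : 'cV_n) :
  c != 0 -> A *m c = 0 -> (\rank A < n)%N.
Proof.
move=> c_neq0 Ac0; rewrite ltn_neqAle rank_leq_col andbT.
apply: contraNneq c_neq0 => rkA.
have AT_free : row_free A^T by rewrite /row_free mxrank_tr rkA.
have : c^T *m A^T == 0 by rewrite -trmx_mul Ac0 trmx0.
by rewrite (mulmx_free_eq0 _ AT_free) => /eqP cT0; rewrite -[c]trmxK cT0 trmx0.
Qed.

Lemma exists_notin_codom (T T' : finType) (g : T -> T') :
  (#|T| < #|T'|)%N -> exists j, j \notin codom g.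
Proof.
move=> card_lt; apply/existsP; rewrite -negb_forall; apply: contraTN card_lt.
move=> /forallP g_onto; rewrite -leqNgt -(size_codom g) (leq_trans _ (card_size _)) //.
by apply/subset_leq_card/subsetP => j _; apply: g_onto.
Qed.

Lemma nonsingular_maximal_minor (F : fieldType) m n (A : 'M[F]_(m, n)) :
  exists (f : 'I_(\rank A) -> 'I_m) (g : 'I_(\rank A) -> 'I_n),
    [/\ (A <= rowsub f A)%MS, injective g & \det (mxsub f g A) != 0].
Proof.
pose f := maxrankfun A.
have rowsub_full : row_full (rowsub f A)^T.
  by rewrite /row_full mxrank_tr (eq_maxrowsub A).
pose g := fullrankfun rowsub_full.
exists f, g; split; first by rewrite (eq_maxrowsub A).
  exact: fullrankfun_inj.
have := fullrowsub_unit rowsub_full; rewrite unitmxE unitfE -det_tr.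
by congr (\det _ != 0); apply/matrixP => i k; rewrite !mxE.
Qed.

Lemma int_kernel_minor_bound (R : numFieldType) m n (A : 'M[int]_(m, n)) (c : 'cV[R]_n) :
  c != 0 -> map_mx intr A *m c = 0 ->
  exists2 r, (r < n)%N & exists D : 'cV[int]_n, [/\ D != 0, A *m D = 0 &
    forall l, exists (f : 'I_r -> 'I_m) (g : 'I_r -> 'I_n),
      `|D l 0| <= `|\det (mxsub f g A)|].
Proof.
move=> c_neq0 Ac0; set AR : 'M[R]_(m, n) := map_mx intr A.
have [f [g [AR_sub g_inj detR_neq0]]] := nonsingular_maximal_minor AR.
have [j j_notin_g] : exists j, j \notin codom g.
  by apply: exists_notin_codom; rewrite !card_ord (rank_lt_of_kernel c_neq0 Ac0).
pose M := rowsub f A.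
have colsub_M g' : colsub g' M = mxsub f g' A by apply/matrixP => i k; rewrite !mxE.
have det_neq0 : \det (colsub g M) != 0.
  by move: detR_neq0; rewrite colsub_M -map_mxsub det_map_mx; apply: contra_neq => ->.
exists (\rank AR); first exact: rank_lt_of_kernel c_neq0 Ac0.
exists (cramer_vector M g j); split.
- apply: contra_neq det_neq0 => D0; apply/eqP.
  by rewrite -oppr_eq0 -(cramer_vector_j M j_notin_g) D0 mxE.
- have : map_mx intr (A *m cramer_vector M g j) = 0 :> 'cV[R]_m.
    case/submxP: AR_sub => W AR_eq; rewrite map_mxM [X in X *m _]AR_eq.
    by rewrite -mulmxA -map_mxsub -map_mxM mul_cramer_vector map_mx0 mulmx0.
  move/matrixP => AD0; apply/matrixP => l k; apply: (@intr_inj R).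
  by have := AD0 l k; rewrite !mxE rmorph0.
- move=> l; have [g' D_le] := cramer_vector_minor M l g_inj j_notin_g.
  by exists f, g'; rewrite -colsub_M.
Qed.

Section PatternMatrix.
Variables (X : Type) (n : nat) (v : 'I_n -> X -> bool).

Definition realized (b : {ffun 'I_n -> bool}) := `[< exists x, forall i, v i x = b i >].

(* Rows are indexed by all of {0,1}^n; unrealized patterns give zero rows. *)
Definition pattern_mx (R : nzSemiRingType) : 'M[R]_(#|{ffun 'I_n -> bool}|, n) :=
  \matrix_(k, i) (realized (enum_val k) && enum_val k i)%:R.

Lemma pattern_mx_zero_one : zero_one_mx (pattern_mx int).
Proof. by move=> k i; rewrite mxE; case: (_ && _); [right | left]. Qed.

Lemma map_pattern_mx (R : nzRingType) : map_mx intr (pattern_mx int) = pattern_mx R.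
Proof. by apply/matrixP => k i; rewrite !mxE rmorph_nat. Qed.

Lemma mul_pattern_mx_eq0 (R : comNzRingType) (c : 'cV[R]_n) :
  pattern_mx R *m c = 0 <-> forall x, \sum_i c i 0 * (v i x)%:R = 0.
Proof.
split=> [/matrixP Pc0 x | c_ker].
  pose b := [ffun i => v i x].
  have := Pc0 (enum_rank b) 0; rewrite !mxE => Pb0; rewrite -[RHS]Pb0.
  have b_realized : realized b by apply/asboolP; exists x => i; rewrite ffunE.
  by apply: eq_bigr => i _; rewrite !mxE enum_rankK b_realized ffunE mulrC.
apply/matrixP => k z; rewrite ord1 !mxE.
case realized_k: (realized (enum_val k)).
  have /asboolP [x vx] := realized_k.
  by rewrite -[RHS](c_ker x); apply: eq_bigr => i _; rewrite !mxE realized_k -vx mulrC.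
by rewrite big1 // => i _; rewrite !mxE realized_k mul0r.
Qed.

End PatternMatrix.

Theorem lemma2 (R : realType) (X : Type) (x0 : X) (n : nat)
    (v : 'I_n -> X -> bool)
    (v_inj : injective v)
    (Zne : (0 < n)%N)
    (v_nz : forall i : 'I_n, exists x : X, v i x = true)
    (Zdep : exists c : 'I_n -> R, (exists i, c i != 0) /\
        forall x : X, \sum_(i < n) c i * ((v i x)%:R : R) = 0) :
  exists D : 'I_n -> int,
    (exists i, D i != 0) /\
    (forall i, `|D i| <= amax n.-1) /\
    (forall x : X, \sum_(i < n) D i * ((v i x)%:R : int) = 0).
Proof.
case: Zdep => c [[i0 ci0_neq0] c_ker].
have cv_neq0 : \col_i c i != 0 by apply/matrix0Pn; exists i0, 0; rewrite mxE.
have : map_mx intr (pattern_mx v int) *m \col_i c i = 0.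
  by rewrite map_pattern_mx; apply/mul_pattern_mx_eq0 => x; under eq_bigr do rewrite mxE.
case/(int_kernel_minor_bound cv_neq0) => r r_lt_n [D [/matrix0Pn D_neq0 PD0 D_minor]].
exists (D^~ 0); split; [|split].
- by case: D_neq0 => i [k]; rewrite ord1; exists i.
- move=> l; have [f [g /le_trans D_le]] := D_minor l; apply: D_le.
  apply: le_trans (abs_det_le_amax (zero_one_mxsub f g (pattern_mx_zero_one v))) _.
  by apply: le_amax; rewrite -ltnS (ltn_predK r_lt_n).
- exact/mul_pattern_mx_eq0.
Qed.
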